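(* Let $G$ be a connected graph with at least $3$ vertices and $\lambda_3(G)=k$, and let $x,y$ be two adjacent vertices of $G$. Then $d_G(x)\ge k+1$ or $d_G(y)\ge k+1$.
   Context: For a graph $G$ and $S\subseteq V(G)$ with $|S|\ge 2$, an $S$-tree is a subgraph of $G$ that is a tree containing all vertices of $S$; $\lambda(S)$ is the maximum number of pairwise edge-disjoint $S$-trees, and $\lambda_3(G)=\min\{\lambda(S): |S|=3\}$. $d_G(v)$ is the degree of $v$ in $G$. *)

From mathcomp Require Import all_boot.
Set Implicit Arguments. Unset Strict Implicit. Unset Printing Implicit Defensive.

Definition simple_graph (T : finType) (e : rel T) : Prop :=
  symmetric e /\ irreflexive e.

Definition deg (T : finType) (e : rel T) (v : T) : nat := #|[set w | e v w]|.

(* A subgraph H = (V(H), E(H)); edges are 2-element vertex sets. *)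
Definition subgraph_t (T : finType) : Type := ({set T} * {set {set T}})%type.

Definition is_subgraph (T : finType) (e : rel T) (H : subgraph_t T) : Prop :=
  forall f, f \in H.2 -> exists u v, [/\ e u v, f = [set u; v], u \in H.1 & v \in H.1].

Definition sadj (T : finType) (H : subgraph_t T) : rel T :=
  fun u v => (u != v) && ([set u; v] \in H.2).

Definition sconnected (T : finType) (H : subgraph_t T) : Prop :=
  forall u v, u \in H.1 -> v \in H.1 -> connect (sadj H) u v.

Definition sacyclic (T : finType) (H : subgraph_t T) : Prop :=
  forall c : seq T, 3 <= size c -> uniq c -> ~~ cycle (sadj H) c.

Definition is_tree (T : finType) (e : rel T) (H : subgraph_t T) : Prop :=
  [/\ is_subgraph e H, sconnected H & sacyclic H].

Definition S_tree (T : finType) (e : rel T) (S : {set T}) (H : subgraph_t T) : Prop :=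
  is_tree e H /\ S \subset H.1.

Definition has_S_packing (T : finType) (e : rel T) (S : {set T}) (m : nat) : Prop :=
  exists F : 'I_m -> subgraph_t T,
    (forall i, S_tree e S (F i)) /\
    (forall i j, i != j -> [disjoint (F i).2 & (F j).2]).

Definition lambda_is (T : finType) (e : rel T) (S : {set T}) (m : nat) : Prop :=
  has_S_packing e S m /\ (forall m', has_S_packing e S m' -> m' <= m).

Definition lambda3_is (T : finType) (e : rel T) (k : nat) : Prop :=
  (exists S : {set T}, #|S| = 3 /\ lambda_is e S k) /\
  (forall (S : {set T}) m, #|S| = 3 -> lambda_is e S m -> k <= m).

Definition graph_connected (T : finType) (e : rel T) : Prop :=
  forall u v : T, connect e u v.

From mathcomp Require Import all_boot.
From Stdlib Require Import Classical.

Set Implicit Arguments. Unset Strict Implicit. Unset Printing Implicit Defensive.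

(* Let x y be adjacent, pick a third vertex z and put S = {x, y, z}.  Since
   lambda_3(G) = k, any maximum packing of m = lambda(S) pairwise edge-disjoint
   S-trees has m >= k trees.  Every tree meets x and y in at least one edge, and
   the sets of tree edges at a vertex v are disjoint subsets of the edges of G
   at v, so they can only hold deg(v) edges in total.
   - If some tree T0 uses the edge xy, then T0 has a second edge at x or at y
     (otherwise {x, y} is a component of T0 missing z), so deg(x) or deg(y)
     is at least m + 1.
   - Otherwise no tree uses the edge xy at x, so the m trees share at most
     deg(x) - 1 edges at x, and again deg(x) >= m + 1.
   The file first proves the counting facts on disjoint families of sets, then
   the facts about single trees, then the bound on packings, and finally the
   theorem. *)

Lemma card_bigcup_disjoint (I U : finType) (A : I -> {set U}) :
  (forall i j, i != j -> [disjoint A i & A j]) ->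
  #|\bigcup_i A i| = \sum_i #|A i|.
Proof.
move=> disjA; rewrite -big_enum -[RHS]big_enum /=.
elim: (enum I) (enum_uniq I) => [|a r IH] /=; first by rewrite !big_nil cards0.
case/andP=> a_r r_uniq; rewrite !big_cons -IH // cardsU.
suff -> : A a :&: \bigcup_(i <- r) A i = set0 by rewrite cards0 subn0.
apply: disjoint_setI0; rewrite bigcup_seq; apply: bigcup_disjoint => i i_r.
by apply: disjA; apply: contraNneq a_r => ->.
Qed.

Lemma sum_card_disjoint_le (I U : finType) (A : I -> {set U}) (E : {set U}) :
  (forall i j, i != j -> [disjoint A i & A j]) -> (forall i, A i \subset E) ->
  \sum_i #|A i| <= #|E|.
Proof.
move=> disjA subAE; rewrite -card_bigcup_disjoint //.
by apply/subset_leq_card/bigcupsP => i _.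
Qed.

Lemma card_le_sum_pos (I : finType) (f : I -> nat) :
  (forall i, 0 < f i) -> #|I| <= \sum_i f i.
Proof. by move=> f_pos; rewrite -sum1_card; apply: leq_sum. Qed.

Lemma card_lt_sum_pos (I : finType) (f : I -> nat) (i0 : I) :
  (forall i, 0 < f i) -> 1 < f i0 -> #|I| < \sum_i f i.
Proof.
move=> f_pos f_i0; rewrite -sum1_card (bigD1 i0) //= [X in _ < X](bigD1 i0) //=.
by rewrite -addSn leq_add // leq_sum.
Qed.

Lemma bounded_max_exists (P : nat -> Prop) (B : nat) :
  P 0 -> (forall m, P m -> m <= B) ->
  exists m, P m /\ forall m', P m' -> m' <= m.
Proof.
elim: B => [|B IH] P0 P_le.
  by exists 0; split => // m /P_le; rewrite leqn0 => /eqP ->.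
have [PB|notPB] := classic (P B.+1); first by exists B.+1.
apply: IH => // m Pm; move: (P_le m Pm); rewrite leq_eqVlt => /orP[/eqP Em|//].
by rewrite Em in Pm.
Qed.

Definition star (T : finType) (H : subgraph_t T) (v : T) : {set {set T}} :=
  [set f in H.2 | v \in f].

Definition incident (T : finType) (e : rel T) (v : T) : {set {set T}} :=
  [set [set v; u] | u in [set u | e v u]].

Lemma card_incident (T : finType) (e : rel T) (v : T) :
  #|incident e v| <= deg e v.
Proof. exact: leq_imset_card. Qed.

Lemma star_sub_incident (T : finType) (e : rel T) (H : subgraph_t T) (v : T) :
  symmetric e -> is_subgraph e H -> star H v \subset incident e v.
Proof.
move=> e_sym subH; apply/subsetP => f; rewrite inE.
case/andP=> /subH[a [b [e_ab -> _ _]]]; rewrite in_set2 => /orP[] /eqP ->.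
all: apply/imsetP.
- by exists b; rewrite ?inE.
- by exists a; rewrite ?inE 1?e_sym // setUC.
Qed.

Lemma star_nonempty (T : finType) (H : subgraph_t T) (v w : T) :
  sconnected H -> v \in H.1 -> w \in H.1 -> v != w -> 0 < #|star H v|.
Proof.
move=> connH v_H w_H neq_vw; have /connectP[[|u p] /= walk last_p] :=
  connH v w v_H w_H; first by rewrite last_p eqxx in neq_vw.
case/andP: walk => /andP[_ vu_H] _; apply/card_gt0P; exists [set v; u].
by rewrite inE vu_H set21.
Qed.

Lemma isolated_edge_component (T : finType) (H : subgraph_t T) (x y z : T) :
  {in star H x, forall f, f = [set x; y]} ->
  {in star H y, forall f, f = [set x; y]} ->
  connect (sadj H) x z -> z \in [set x; y].
Proof.
move=> star_x star_y /connectP[p walk ->] {z}.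
suff walk_in (u : T) : u \in [set x; y] -> path (sadj H) u p -> last u p \in [set x; y].
  exact: walk_in (set21 x y) walk.
elim: p u {walk} => [//|v p IH] u u_xy /= /andP[/andP[_ uv_H] walk].
apply: IH walk; have uv_star (w : T) : w \in [set u; v] -> [set u; v] \in star H w.
  by move=> w_uv; rewrite inE uv_H.
case/set2P: u_xy => def_u; rewrite def_u in uv_star *.
- by rewrite -(star_x _ (uv_star _ (set21 _ _))) set22.
- by rewrite -(star_y _ (uv_star _ (set21 _ _))) set22.
Qed.

Lemma edge_branches (T : finType) (H : subgraph_t T) (x y z : T) :
  sconnected H -> x \in H.1 -> z \in H.1 -> z \notin [set x; y] ->
  [set x; y] \in H.2 -> 1 < #|star H x| \/ 1 < #|star H y|.
Proof.
move=> connH x_H z_H z_xy xy_H; apply/orP; rewrite !ltnNge -negb_and.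
apply: contra z_xy => /andP[/card_le1_eqP star_x /card_le1_eqP star_y].
apply: (isolated_edge_component _ _ (connH x z x_H z_H)) => f f_star.
- by apply: star_x; rewrite // inE xy_H set21.
- by apply: star_y; rewrite // inE xy_H set22.
Qed.

Section Packing.

Variables (T : finType) (e : rel T) (S : {set T}) (m : nat).
Variable F : 'I_m -> subgraph_t T.
Hypothesis e_sym : symmetric e.
Hypothesis F_trees : forall i, S_tree e S (F i).
Hypothesis F_disj : forall i j, i != j -> [disjoint (F i).2 & (F j).2].

Lemma stars_disjoint (v : T) (i j : 'I_m) :
  i != j -> [disjoint star (F i) v & star (F j) v].
Proof.
move=> neq_ij; apply: disjointWl (disjointWr _ (F_disj neq_ij));
  by apply/subsetP => f; rewrite inE => /andP[].
Qed.

Lemma packing_star_nonempty (v w : T) (i : 'I_m) :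
  v \in S -> w \in S -> v != w -> 0 < #|star (F i) v|.
Proof.
have [[_ connH _] S_H] := F_trees i.
by move=> v_S w_S; apply: star_nonempty; rewrite // (subsetP S_H).
Qed.

Lemma sum_stars_le (v : T) (E : {set {set T}}) :
  (forall i, star (F i) v \subset E) -> \sum_i #|star (F i) v| <= #|E|.
Proof. exact/sum_card_disjoint_le/stars_disjoint. Qed.

Lemma sum_stars_le_deg (v : T) : \sum_i #|star (F i) v| <= deg e v.
Proof.
apply: leq_trans (card_incident e v); apply: sum_stars_le => i.
by apply: star_sub_incident => //; have [[]] := F_trees i.
Qed.

Variables (v w : T).
Hypotheses (v_S : v \in S) (w_S : w \in S) (neq_vw : v != w).

Lemma packing_lt_deg_branch (i0 : 'I_m) : 1 < #|star (F i0) v| -> m < deg e v.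
Proof.
move=> branch; apply: leq_trans (sum_stars_le_deg v).
rewrite -[m in m < _]card_ord; apply: card_lt_sum_pos branch => i.
exact: packing_star_nonempty w_S neq_vw.
Qed.

Lemma packing_lt_deg_avoid :
  e v w -> (forall i, [set v; w] \notin (F i).2) -> m < deg e v.
Proof.
move=> e_vw avoid; have vw_inc : [set v; w] \in incident e v.
  by apply/imsetP; exists w; rewrite ?inE.
apply: leq_trans (card_incident e v); rewrite (cardsD1 [set v; w]) vw_inc.
rewrite add1n ltnS -[m in m <= _]card_ord.
apply: leq_trans (card_le_sum_pos _) (sum_stars_le _) => i.
  exact: packing_star_nonempty w_S neq_vw.
have [[subH _ _] _] := F_trees i; apply/subsetP => f f_star.
rewrite !inE (subsetP (star_sub_incident v e_sym subH)) // andbT.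
by apply: contraNneq (avoid i) => <-; move: f_star; rewrite inE => /andP[].
Qed.

End Packing.

(* lambda(S) is well defined once S has two distinct vertices: the number of
   edge-disjoint S-trees is bounded since each tree has an edge. *)
Lemma lambda_exists (T : finType) (e : rel T) (S : {set T}) (v w : T) :
  v \in S -> w \in S -> v != w -> exists m, lambda_is e S m.
Proof.
move=> v_S w_S neq_vw; have empty_packing : has_S_packing e S 0.
  by exists (fun _ => (set0, set0)); split; case.
suff /(bounded_max_exists empty_packing)[m []] :
  forall m, has_S_packing e S m -> m <= #|{set T}|.
  by exists m.
move=> m [F [F_trees F_disj]]; rewrite -cardsT.
apply: leq_trans (sum_card_disjoint_le F_disj (fun i => subsetT _)).
rewrite -[m in m <= _]card_ord; apply: card_le_sum_pos => i.
by apply: leq_trans (packing_star_nonempty F_trees i v_S w_S neq_vw) _;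
  apply/subset_leq_card/subsetP => f; rewrite inE => /andP[].
Qed.

Theorem mainTheorem5 (T : finType) (e : rel T) (k : nat) (x y : T) :
  simple_graph e -> graph_connected e -> 3 <= #|T| ->
  lambda3_is e k -> e x y ->
  k.+1 <= deg e x \/ k.+1 <= deg e y.
Proof.
move=> [e_sym e_irr] _ card_T [_ k_min] e_xy.
have neq_xy : x != y by apply: contraTneq e_xy => ->; rewrite e_irr.
have [z z_xy] : exists z, z \notin [set x; y].
  apply/existsP; rewrite -negb_forall; apply: contraTN card_T => /forallP all_xy.
  rewrite -ltnNge ltnS; move: (cards2 x y); rewrite neq_xy /= => <-.
  by rewrite -cardsT subset_leq_card //; apply/subsetP.
pose S := x |: [set y; z].
have [x_S y_S z_S] : [/\ x \in S, y \in S & z \in S] by rewrite !inE !eqxx !orbT.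
have card_S : #|S| = 3.
  move: z_xy; rewrite cardsU1 cards2 !inE !negb_or ![_ == z]eq_sym.
  by case/andP=> -> ->; rewrite (negbTE neq_xy).
have [m lambda_S] := lambda_exists e x_S y_S neq_xy.
have le_km : k <= m := k_min S m card_S lambda_S.
have [[F [F_trees F_disj]] _] := lambda_S.
have [i0 xy_i0|avoid] := pickP (fun i => [set x; y] \in (F i).2); last first.
  left; apply: leq_ltn_trans le_km _.
  apply: (packing_lt_deg_avoid e_sym F_trees F_disj x_S y_S neq_xy e_xy) => i.
  exact/negbT/avoid.
have [[_ conn_i0 _] S_i0] := F_trees i0.
have [branch|branch] := edge_branches conn_i0 (subsetP S_i0 x x_S)
  (subsetP S_i0 z z_S) z_xy xy_i0; [left | right]; apply: leq_ltn_trans le_km _.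
- exact: (packing_lt_deg_branch e_sym F_trees F_disj x_S y_S neq_xy branch).
- have neq_yx : y != x by rewrite eq_sym.
  exact: (packing_lt_deg_branch e_sym F_trees F_disj y_S x_S neq_yx branch).
Qed.
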